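(* Let $s_1\ge 1$ and $s_2\ge 0$ be integers, and for integers $N$ let $$f_{s_1,s_2}(N)=\binom{s_2}{N}\sum_{i}\binom{s_1}{i}\binom{s_1}{N-i}\binom{N}{i}.$$ Then there is an integer $g(s_1,s_2)$ such that $f_{s_1,s_2}(N)$ is a non-decreasing function of $N$ for integers $N\le g(s_1,s_2)$ and a non-increasing function of $N$ for integers $N\ge g(s_1,s_2)$. Moreover, $$g(s_1,s_2)=\left\lfloor 2s_1+s_2+\tfrac32-\sqrt{4s_1^2+4s_1+(s_2+\tfrac12)^2}\right\rfloor+\delta$$ with $\delta\in\{0,1\}$.
   Context: Binomial coefficients $\binom{a}{b}$ are taken to be $0$ when $b<0$ or $b>a$; the sum is over all integers $i$. If $f_{s_1,s_2}$ attains equal maxima at two consecutive integers $N$ and $N+1$, either may be taken as $g(s_1,s_2)$. $\lfloor\cdot\rfloor$ denotes the integer part. *)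

From HB Require Import structures.
From mathcomp Require Import all_boot all_order all_algebra.
From mathcomp Require Import reals.
Set Implicit Arguments. Unset Strict Implicit. Unset Printing Implicit Defensive.
Import Order.TTheory GRing.Theory Num.Theory.

Definition binZ (a b : int) : nat :=
  match a, b with
  | Posz m, Posz k => 'C(m, k)
  | _, _ => 0
  end.

(* f_{s1,s2}(N) = C(s2,N) * sum_i C(s1,i) C(s1,N-i) C(N,i).
   The sum over all integers i reduces to 0 <= i <= s1, since C(s1,i) = 0 otherwise. *)
Definition fss (s1 s2 : nat) (N : int) : nat :=
  binZ s2 N * \sum_(0 <= i < s1.+1)
     ('C(s1, i) * binZ s1 (N - i%:Z)%R * binZ N i).

(* Write [h(N) = sum_i C(s1,i) C(s1,N-i) C(N,i)], so that [f(N) = C(s2,N) h(N)]. Splitting each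
   Vandermonde weight [C(s1,i) C(s1,N-i)] according to where one more element goes yields
     [2(N+1)(2s1-N) h(N) = (N+1)^2 h(N+1) + sum_i (N+1-2i)^2 C(s1,i) C(s1,N+1-i) C(N+1,i)].
   The last sum is nonnegative, and by Chebyshev's sum inequality ([C(N,i)] and [(N-2i)^2] are
   oppositely ordered) together with the second moment of the hypergeometric weights it is at most
   [(2s1-N-1) h(N+1)]. This bounds [f(N+1)/f(N) = (s2-N)/(N+1) * h(N+1)/h(N)] on both sides: the
   ratio is at least 1 when [N^2+N+2s1 <= 2(2s1-N)(s2-N)], i.e. when [N+1 <= x] for the real
   number [x] of the statement, and at most 1 when [N > x]. *)

From HB Require Import structures.
From mathcomp Require Import all_boot all_order all_algebra.
From mathcomp Require Import reals.
From mathcomp Require Import zify ring lra.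
Import Order.TTheory GRing.Theory Num.Theory.
Set Implicit Arguments. Unset Strict Implicit. Unset Printing Implicit Defensive.

Local Open Scope ring_scope.

Lemma chebyshev_sum (R : numDomainType) (I : Type) (r : seq I) (a g t : I -> R) :
  (forall i, 0 <= a i) -> (forall i j, (g i - g j) * (t i - t j) <= 0) ->
  (\sum_(i <- r) a i * g i * t i) * (\sum_(i <- r) a i)
  <= (\sum_(i <- r) a i * g i) * (\sum_(i <- r) a i * t i).
Proof.
move=> a_ge0 opposite.
have double_sum (f h : I -> R) :
    \sum_(i <- r) \sum_(j <- r) f i * h j = (\sum_(i <- r) f i) * \sum_(j <- r) h j.
  by rewrite big_distrl; apply: eq_bigr => i _; rewrite big_distrr.
have : \sum_(i <- r) \sum_(j <- r) a i * a j * ((g i - g j) * (t i - t j)) <= 0.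
  apply: sumr_le0 => i _; apply: sumr_le0 => j _.
  by rewrite mulr_ge0_le0 ?mulr_ge0.
have -> : \sum_(i <- r) \sum_(j <- r) a i * a j * ((g i - g j) * (t i - t j))
   = \sum_(i <- r) \sum_(j <- r) (a i * g i * t i) * a j
   + \sum_(i <- r) \sum_(j <- r) a i * (a j * g j * t j)
   - \sum_(i <- r) \sum_(j <- r) (a i * g i) * (a j * t j)
   - \sum_(i <- r) \sum_(j <- r) (a i * t i) * (a j * g j).
  rewrite -!big_split -!sumrB /=; apply: eq_bigr => i _.
  by rewrite -!big_split -!sumrB /=; apply: eq_bigr => j _; ring.
rewrite !double_sum -subr_le0; set X := (X in X <= 0).
have -> : X = 2 * ((\sum_(i <- r) a i * g i * t i) * (\sum_(i <- r) a i)
                   - (\sum_(i <- r) a i * g i) * (\sum_(i <- r) a i * t i)).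
  by rewrite /X; ring.
by rewrite pmulr_rle0.
Qed.

Lemma leq_bin_succ n k : (2 * k.+1 <= n)%N -> ('C(n, k) <= 'C(n, k.+1))%N.
Proof.
move=> hk; rewrite -(@leq_pmul2l k.+1) // mul_bin_left leq_mul2r.
by apply/orP; right; lia.
Qed.

Lemma leq_bin_lower_half n k m : (k <= m)%N -> (2 * m <= n)%N -> ('C(n, k) <= 'C(n, m))%N.
Proof.
elim: m => [|m IH]; first by rewrite leqn0 => /eqP->.
rewrite leq_eqVlt => /predU1P[-> // | /IH le_km] hm.
by apply: leq_trans (le_km _) (leq_bin_succ hm); lia.
Qed.

Lemma bin_minn n i : (i <= n)%N -> 'C(n, minn i (n - i)) = 'C(n, i).
Proof. by move=> hi; case: leqP => // _; rewrite bin_sub. Qed.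

(* [(n - 2i)^2] measures the distance of [i] from the centre [n/2]. *)
Lemma leq_bin_center n i j :
  (n%:Z - 2 * i%:Z) ^+ 2 <= (n%:Z - 2 * j%:Z) ^+ 2 -> ('C(n, j) <= 'C(n, i))%N.
Proof.
rewrite !expr2 => closer.
have [hj | /bin_small-> //] := leqP j n.
have [hi | hi] := leqP i n; last by exfalso; nia.
rewrite -(bin_minn hi) -(bin_minn hj) leq_bin_lower_half //; nia.
Qed.

Section VandermondeWeights.
Variable s : nat.

Definition vdm (n i : nat) : nat := 'C(s, i) * 'C(s, n - i).

Lemma sum_vdm n : (\sum_(0 <= i < n.+1) vdm n i)%N = 'C(2 * s, n).
Proof. by rewrite big_mkord binomial.Vandermonde addnn mul2n. Qed.

(* Choose one of the [2s - n] unused elements to add to the left or to the right block. *)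
Lemma vdm_recurrence n i : (i <= n)%N ->
  ((2 * s - n) * vdm n i = i.+1 * vdm n.+1 i.+1 + (n.+1 - i) * vdm n.+1 i)%N.
Proof.
move=> le_in; rewrite /vdm subSS.
have [le_is | lt_si] := leqP i s; last first.
  by rewrite (bin_small lt_si) (bin_small (leqW lt_si)) !mul0n !muln0.
have [le_nis | lt_sni] := leqP (n - i) s; last first.
  have lt_sn1i : (s < n.+1 - i)%N by rewrite subSn // (leqW lt_sni).
  by rewrite (bin_small lt_sni) (bin_small lt_sn1i) !muln0.
rewrite [(i.+1 * _)%N]mulnA mul_bin_left [((n.+1 - i) * _)%N]mulnCA subSn // mul_bin_left.
have -> : (2 * s - n = (s - i) + (s - (n - i)))%N by lia.
ring.
Qed.

Lemma sum_vdm_recurrence n (phi : nat -> int) :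
  (2 * s - n)%N%:Z * \sum_(0 <= i < n.+1) phi i * (vdm n i)%:Z
  = \sum_(0 <= i < n.+2) (i%:Z * phi i.-1 + (n.+1 - i)%N%:Z * phi i) * (vdm n.+1 i)%:Z.
Proof.
rewrite big_distrr /=.
transitivity (\sum_(0 <= i < n.+1) (phi i * (i.+1 * vdm n.+1 i.+1)%N%:Z
                                   + phi i * ((n.+1 - i) * vdm n.+1 i)%N%:Z)).
  apply: eq_big_nat => i /andP[_ hi].
  by rewrite mulrCA -PoszM vdm_recurrence // PoszD mulrDr.
rewrite big_split /=; under [RHS]eq_bigr do rewrite mulrDl.
rewrite big_split /=; congr (_ + _).
  rewrite [RHS]big_nat_recl // /= !mul0r add0r.
  by apply: eq_bigr => i _; rewrite PoszM /=; ring.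
rewrite [RHS]big_nat_recr //= subnn !mul0r addr0.
by apply: eq_bigr => i _; rewrite PoszM; ring.
Qed.

Definition dev2 (n i : nat) : int := (n%:Z - 2 * i%:Z) ^+ 2.

Definition vdm_moment n : int := \sum_(0 <= i < n.+1) dev2 n i * (vdm n i)%:Z.

Lemma vdm_moment_recurrence n :
  (2 * s - n)%N%:Z * vdm_moment n
  = (n%:Z - 1) * vdm_moment n.+1 + n.+1%:Z * ('C(2 * s, n.+1))%:Z.
Proof.
rewrite /vdm_moment sum_vdm_recurrence -sum_vdm (big_morph Posz PoszD (erefl 0%:Z)).
rewrite !big_distrr -big_split /=; apply: eq_big_nat => i /andP[_ le_in1].
rewrite /dev2; case: i le_in1 => [|i] le_in1 /=; first by rewrite subn0; ring.
by rewrite subSS -subzn; [ring | rewrite -ltnS].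
Qed.

Lemma vdm_moment_top : vdm_moment (2 * s) = 0.
Proof.
rewrite /vdm_moment big1 // => i _; rewrite /vdm /dev2.
have [lt_is | lt_si | ->] := ltngtP i s.
- by rewrite (@bin_small s (2 * s - i)) ?muln0 ?mulr0 //; lia.
- by rewrite (bin_small lt_si) mul0n mulr0.
- by rewrite PoszM subrr expr0n mul0r.
Qed.

Lemma vdm_moment_le n : (n <= 2 * s)%N ->
  vdm_moment n <= (2 * s - n)%N%:Z * ('C(2 * s, n))%:Z.
Proof.
move=> le_n2s.
suffices bound k : (k <= 2 * s)%N ->
    vdm_moment (2 * s - k) <= k%:Z * ('C(2 * s, 2 * s - k))%:Z.
  by have := bound _ (leq_subr n (2 * s)); rewrite subKn.
elim: k => [|k IH] le_k2s.
  by rewrite subn0 vdm_moment_top mul0r.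
move Em : (2 * s - k.+1)%N => m.
have e_2sm : (2 * s - m = k.+1)%N by lia.
have := IH (ltnW le_k2s); have -> : (2 * s - k = m.+1)%N by lia.
have rec := vdm_moment_recurrence m; rewrite e_2sm in rec.
have bin_rec : k.+1%:Z * ('C(2 * s, m))%:Z = m.+1%:Z * ('C(2 * s, m.+1))%:Z.
  by rewrite -!PoszM mul_bin_left e_2sm.
case: m {Em e_2sm} rec bin_rec => [|m] rec bin_rec IHm.
  by rewrite /vdm_moment big_nat1 /dev2 subrr expr0n mul0r.
rewrite -(@ler_pM2l _ k.+1%:Z) // rec bin_rec -subr_ge0.
set M := vdm_moment m.+2 in IHm *; set C := Posz 'C(2 * s, m.+2) in IHm *.
set D := (X in 0 <= X).
have -> : D = 2 * k%:Z * C + m%:Z * (k%:Z * C - M).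
  by rewrite /D -[m.+2]addn2 -[m.+1]addn1 -[k.+1]addn1 !PoszD; ring.
by rewrite addr_ge0 ?mulr_ge0 ?subr_ge0.
Qed.

Definition binsum n : nat := \sum_(0 <= i < n.+1) vdm n i * 'C(n, i).

Definition binsum_moment n : int := \sum_(0 <= i < n.+1) dev2 n i * (vdm n i * 'C(n, i))%N%:Z.

Lemma binsumE n : (binsum n)%:Z = \sum_(0 <= i < n.+1) (vdm n i * 'C(n, i))%N%:Z.
Proof. exact: big_morph. Qed.

Lemma binsum_recurrence m :
  2 * ((m.+1 * (2 * s - m))%N%:Z * (binsum m)%:Z)
  = m.+1%:Z ^+ 2 * (binsum m.+1)%:Z + binsum_moment m.+1.
Proof.
have bin_weights i : (i <= m.+1)%N ->
    i%:Z * (m.+1 * 'C(m, i.-1))%N%:Z + (m.+1 - i)%N%:Z * (m.+1 * 'C(m, i))%N%:Z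
    = (i%:Z ^+ 2 + (m.+1 - i)%N%:Z ^+ 2) * ('C(m.+1, i))%:Z.
  rewrite [(m.+1 * 'C(m, i))%N]mul_bin_down; case: i => [|i] _.
    by rewrite !bin0 subn0; ring.
  by rewrite [(m.+1 * _)%N]mul_bin_diag !PoszM; ring.
have -> : (m.+1 * (2 * s - m))%N%:Z * (binsum m)%:Z
    = (2 * s - m)%N%:Z * \sum_(0 <= i < m.+1) (m.+1 * 'C(m, i))%N%:Z * (vdm m i)%:Z.
  rewrite binsumE !big_distrr /=; apply: eq_bigr => i _; rewrite !PoszM; ring.
rewrite sum_vdm_recurrence binsumE /binsum_moment !big_distrr -big_split /=.
apply: eq_big_nat => i /andP[_ le_im1]; rewrite mulrDl bin_weights // /dev2.
by rewrite !PoszM -subzn //; ring.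
Qed.

Lemma binsum_succ_le m : (m.+1 * binsum m.+1 <= 2 * (2 * s - m) * binsum m)%N.
Proof.
have binsum_moment_ge0 : 0 <= binsum_moment m.+1.
  by apply: sumr_ge0 => i _; rewrite mulr_ge0 ?sqr_ge0.
rewrite -(leq_pmul2l (ltn0Sn m)) -lez_nat.
have -> : (m.+1 * (m.+1 * binsum m.+1))%N%:Z = m.+1%:Z ^+ 2 * (binsum m.+1)%:Z.
  by rewrite !PoszM; ring.
have -> : (m.+1 * (2 * (2 * s - m) * binsum m))%N%:Z
    = 2 * ((m.+1 * (2 * s - m))%N%:Z * (binsum m)%:Z) by rewrite !PoszM; ring.
by rewrite binsum_recurrence lerDl.
Qed.

(* Chebyshev's sum inequality: [dev2 n] and ['C(n, _)] are oppositely ordered. *)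
Lemma binsum_moment_le n : (n <= 2 * s)%N -> binsum_moment n <= (2 * s - n)%N%:Z * (binsum n)%:Z.
Proof.
move=> le_n2s.
have opposite i j : (('C(n, i))%:Z - ('C(n, j))%:Z) * (dev2 n i - dev2 n j) <= 0.
  have [le_ij | lt_ji] := lerP (dev2 n i) (dev2 n j).
    by apply: mulr_ge0_le0; rewrite ?subr_ge0 ?subr_le0 ?lez_nat ?leq_bin_center.
  by apply: mulr_le0_ge0; rewrite ?subr_le0 ?subr_ge0 ?lez_nat ?leq_bin_center ?ltW.
have := @chebyshev_sum _ _ (index_iota 0 n.+1) (fun i => (vdm n i)%:Z) _ _ (fun i => isT) opposite.
have -> : \sum_(0 <= i < n.+1) (vdm n i)%:Z * ('C(n, i))%:Z * dev2 n i = binsum_moment n.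
  by apply: eq_bigr => i _; rewrite PoszM mulrC.
have -> : \sum_(0 <= i < n.+1) (vdm n i)%:Z = ('C(2 * s, n))%:Z.
  by rewrite -sum_vdm; apply/esym/big_morph.
have -> : \sum_(0 <= i < n.+1) (vdm n i)%:Z * ('C(n, i))%:Z = (binsum n)%:Z.
  by rewrite binsumE; apply: eq_bigr => i _; rewrite PoszM.
have -> : \sum_(0 <= i < n.+1) (vdm n i)%:Z * dev2 n i = vdm_moment n.
  by apply: eq_bigr => i _; rewrite mulrC.
move=> cheb; have bin_gt0 : 0 < ('C(2 * s, n))%:Z by rewrite ltz_nat bin_gt0.
rewrite -(ler_pM2r bin_gt0) (le_trans cheb) // -mulrA mulrCA ler_wpM2l //.
exact: vdm_moment_le.
Qed.

Lemma binsum_succ_ge m : (m < 2 * s)%N ->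
  (2 * m.+1 * (2 * s - m) * binsum m <= (m ^ 2 + m + 2 * s) * binsum m.+1)%N.
Proof.
move=> lt_m2s; rewrite -lez_nat.
have -> : (2 * m.+1 * (2 * s - m) * binsum m)%N%:Z
    = 2 * ((m.+1 * (2 * s - m))%N%:Z * (binsum m)%:Z) by rewrite !PoszM; ring.
have -> : ((m ^ 2 + m + 2 * s) * binsum m.+1)%N%:Z
    = m.+1%:Z ^+ 2 * (binsum m.+1)%:Z + (2 * s - m.+1)%N%:Z * (binsum m.+1)%:Z.
  by rewrite -subzn // -[m.+1]addn1 !PoszM !PoszD -natz natrX; ring.
by rewrite binsum_recurrence lerD2l binsum_moment_le.
Qed.

End VandermondeWeights.

Lemma big_nat_widen0 (F : nat -> nat) a c : (a <= c)%N ->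
  (forall i, (a <= i)%N -> F i = 0%N) ->
  (\sum_(0 <= i < c) F i = \sum_(0 <= i < a) F i)%N.
Proof.
move=> le_ac F0; rewrite (big_nat_widen _ _ _ _ _ le_ac) [RHS]big_mkcond /=.
by apply: eq_bigr => i _; case: ltnP => // /F0.
Qed.

Lemma fss_nat s1 s2 (n : nat) : fss s1 s2 n = ('C(s2, n) * binsum s1 n)%N.
Proof.
rewrite /fss /binsum; congr (_ * _)%N.
transitivity (\sum_(0 <= i < s1.+1) vdm s1 n i * 'C(n, i))%N.
  apply: eq_bigr => i _; rewrite /vdm.
  have [le_in | lt_ni] := leqP i n; first by rewrite subzn.
  by rewrite /= (bin_small lt_ni) !muln0.
pose F i := (vdm s1 n i * 'C(n, i))%N.
rewrite -(@big_nat_widen0 F s1.+1 (s1.+1 + n.+1)) ?leq_addr //; last first.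
  by move=> i lt_s1i; rewrite /F /vdm bin_small.
rewrite (@big_nat_widen0 F n.+1) ?leq_addl // => i lt_ni.
by rewrite /F bin_small ?muln0.
Qed.

Lemma fss_succ_ge s1 s2 n : (n < 2 * s1)%N ->
  (n ^ 2 + n + 2 * s1 <= 2 * (2 * s1 - n) * (s2 - n))%N ->
  (fss s1 s2 n <= fss s1 s2 n.+1)%N.
Proof.
move=> lt_n2s1 rising; rewrite !fss_nat.
have bin_s2 := mul_bin_left s2 n.
have k_gt0 : (0 < n.+1 * (2 * (2 * s1 - n)))%N by rewrite muln_gt0 /=; lia.
rewrite -(leq_pmul2l k_gt0).
apply: (@leq_trans ('C(s2, n) * ((n ^ 2 + n + 2 * s1) * binsum s1 n.+1))).
  rewrite (_ : _ * _ = 'C(s2, n) * (2 * n.+1 * (2 * s1 - n) * binsum s1 n))%N; last by ring.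
  by rewrite leq_mul2l binsum_succ_ge ?orbT.
apply: (@leq_trans ('C(s2, n) * (2 * (2 * s1 - n) * (s2 - n) * binsum s1 n.+1))).
  by rewrite leq_mul2l leq_mul2r rising !orbT.
rewrite (_ : n.+1 * _ * ('C(s2, n.+1) * _)
            = 2 * (2 * s1 - n) * (n.+1 * 'C(s2, n.+1)) * binsum s1 n.+1)%N; last by ring.
by rewrite bin_s2; apply: eq_leq; ring.
Qed.

Lemma fss_succ_le s1 s2 n : (2 * (2 * s1 - n) * (s2 - n) <= n.+1 ^ 2)%N ->
  (fss s1 s2 n.+1 <= fss s1 s2 n)%N.
Proof.
move=> falling; rewrite !fss_nat -(@leq_pmul2l (n.+1 ^ 2)) ?expn_gt0 //.
apply: (@leq_trans ((s2 - n) * 'C(s2, n) * (2 * (2 * s1 - n) * binsum s1 n))).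
  rewrite -mul_bin_left (_ : n.+1 ^ 2 * _ = n.+1 * 'C(s2, n.+1) * (n.+1 * binsum s1 n.+1))%N.
    by rewrite leq_mul2l binsum_succ_le orbT.
  by ring.
rewrite (_ : _ * _ * _ = 'C(s2, n) * (2 * (2 * s1 - n) * (s2 - n)) * binsum s1 n)%N; last by ring.
rewrite (_ : n.+1 ^ 2 * _ = 'C(s2, n) * n.+1 ^ 2 * binsum s1 n)%N; last by ring.
by rewrite leq_mul2r leq_mul2l falling !orbT.
Qed.

Section Peak.
Variable R : rcfType.
Variables s t : nat.

Let D : R := 4 * s%:R ^+ 2 + 4 * s%:R + (t%:R + 1 / 2) ^+ 2.

Definition peak : R := 2 * s%:R + t%:R + 3 / 2 - Num.sqrt D.

Let sqrtD_ge0 : 0 <= Num.sqrt D.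
Proof. exact: sqrtr_ge0. Qed.

Let sqrtD_sq : Num.sqrt D ^+ 2 = D.
Proof. by rewrite sqr_sqrtr // /D; do 2?apply: addr_ge0; rewrite ?sqr_ge0 ?mulr_ge0. Qed.

Let lt_sqr (a b : R) : 0 <= b -> a ^+ 2 < b ^+ 2 -> a < b.
Proof. by move=> b_ge0 ?; nra. Qed.

Lemma peak_gt0 : 0 < peak.
Proof.
have [s_ge0 t_ge0] : (0 : R) <= s%:R /\ (0 : R) <= t%:R by [].
by rewrite subr_gt0; apply: lt_sqr; rewrite ?sqrtD_sq /D; nra.
Qed.

(* [(2s + t + 3/2 - (n + 1))^2 - D = 2(2s - n)(t - n) - (n^2 + n + 2s)], so [n + 1 <= peak]
   is the condition under which [fss_succ_ge] applies. *)
Lemma peak_rising n : (0 < s)%N -> n.+1%:R <= peak ->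
  (n < 2 * s)%N /\ (n ^ 2 + n + 2 * s <= 2 * (2 * s - n) * (t - n))%N.
Proof.
move=> s_gt0; rewrite /peak -natr1 => le_n1_peak.
have [s_ge0 t_ge0] : (0 : R) <= s%:R /\ (0 : R) <= t%:R by [].
have n_ge0 : (0 : R) <= n%:R by [].
have s_ge1 : (1 : R) <= s%:R by rewrite ler1n.
have sqrtD_gt_t : t%:R + 1 / 2 < Num.sqrt D by apply: lt_sqr => //; rewrite sqrtD_sq /D; nra.
have sqrtD_gt_s : 2 * s%:R + 1 / 2 < Num.sqrt D by apply: lt_sqr => //; rewrite sqrtD_sq /D; nra.
have le_D : D <= (2 * s%:R + t%:R + 3 / 2 - (n%:R + 1)) ^+ 2 by rewrite -sqrtD_sq; nra.
have lt_nt : (n < t)%N by rewrite -(ltr_nat R); lra.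
have lt_n2s : (n < 2 * s)%N by rewrite -(ltr_nat R) natrM; lra.
split => //; rewrite -(ler_nat R) !natrD !natrM !natrB ?(ltnW lt_nt) ?(ltnW lt_n2s) //.
by rewrite ?natrX ?natrM; move: le_D; rewrite /D; nra.
Qed.

Lemma peak_falling n : peak < n%:R -> (2 * (2 * s - n) * (t - n) <= n.+1 ^ 2)%N.
Proof.
rewrite /peak => lt_peak_n.
have [s_ge0 t_ge0] : (0 : R) <= s%:R /\ (0 : R) <= t%:R by [].
have n_ge0 : (0 : R) <= n%:R by [].
have [le_tn | lt_nt] := leqP t n; first by rewrite (eqP le_tn) muln0.
have [le_2sn | lt_n2s] := leqP (2 * s) n; first by rewrite (eqP le_2sn) muln0 mul0n.
have n1_le_t : n%:R + 1 <= t%:R :> R by rewrite natr1 ler_nat.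
have n1_le_2s : n%:R + 1 <= 2 * s%:R :> R by rewrite natr1 -natrM ler_nat.
have lt_D : (2 * s%:R + t%:R + 3 / 2 - n%:R) ^+ 2 < D by rewrite -sqrtD_sq; nra.
rewrite -(ler_nat R) !natrM !natrB ?(ltnW lt_nt) ?(ltnW lt_n2s) // ?natrX ?natrM.
by move: lt_D; rewrite /D; nra.
Qed.

End Peak.

Section IntegerUnimodality.
Variable F : int -> nat.

Lemma homo_int_le_upto (g : int) : (forall N, N < g -> (F N <= F (N + 1))%N) ->
  forall a b, a <= b -> b <= g -> (F a <= F b)%N.
Proof.
move=> up a b le_ab; have [k ->] : exists k : nat, b = a + k%:Z.
  by exists `|b - a|%N; rewrite gez0_abs ?subr_ge0 //; ring.
elim: k => [|k IH] le_bg; first by rewrite addr0.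
rewrite -addn1 PoszD addrA in le_bg *.
apply: leq_trans (IH _) (up _ _); lia.
Qed.

Lemma homo_int_ge_from (g : int) : (forall N, g <= N -> (F (N + 1) <= F N)%N) ->
  forall a b, g <= a -> a <= b -> (F b <= F a)%N.
Proof.
move=> down a b le_ga le_ab; have [k ->] : exists k : nat, b = a + k%:Z.
  by exists `|b - a|%N; rewrite gez0_abs ?subr_ge0 //; ring.
elim: k => [|k IH]; first by rewrite addr0.
rewrite -addn1 PoszD addrA.
apply: leq_trans (down _ _) IH; lia.
Qed.

Lemma unimodal_floor (R : archiFieldType) (x : R) :
  (forall N : int, (N + 1)%:~R <= x -> (F N <= F (N + 1))%N) ->
  (forall N : int, x < N%:~R -> (F (N + 1) <= F N)%N) ->
  exists g : int,
    (forall a b, a <= b -> b <= g -> (F a <= F b)%N) /\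
    (forall a b, g <= a -> a <= b -> (F b <= F a)%N) /\
    exists delta : int, (delta = 0 \/ delta = 1) /\ g = Num.floor x + delta.
Proof.
move=> rising falling; set fl := Num.floor x.
have rising_fl N : N < fl -> (F N <= F (N + 1))%N.
  by move=> lt_Nfl; apply: rising (le_trans _ (floor_le x)); rewrite ler_int -/fl; lia.
have falling_fl N : fl + 1 <= N -> (F (N + 1) <= F N)%N.
  by move=> le_flN; apply: falling (lt_le_trans (floorD1_gt x) _); rewrite ler_int.
have [le_fl | lt_fl] := leqP (F fl) (F (fl + 1)).
- exists (fl + 1); split; [|split; last by exists 1; split; [right|]].
    apply: homo_int_le_upto => N lt_Nfl1; have [/rising_fl // | le_flN] := ltP N fl.
    by have -> : N = fl by lia.
  by apply: homo_int_ge_from.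
- exists fl; have {}lt_fl := ltnW lt_fl; split; [|split; last by exists 0; split; [left|rewrite addr0]].
    by apply: homo_int_le_upto.
  apply: homo_int_ge_from => N le_flN; have [lt_flN | le_Nfl] := ltP fl N.
    by apply: falling_fl; lia.
  by have -> : N = fl by lia.
Qed.

End IntegerUnimodality.

Theorem theorem1p1 (R : realType) (s1 s2 : nat) :
  (1 <= s1)%N ->
  exists g : int,
    (forall a b : int, (a <= b)%R -> (b <= g)%R -> (fss s1 s2 a <= fss s1 s2 b)%N) /\
    (forall a b : int, (g <= a)%R -> (a <= b)%R -> (fss s1 s2 b <= fss s1 s2 a)%N) /\
    exists delta : int, (delta = 0 \/ delta = 1) /\
      g = (Num.floor ((2 * s1%:R + s2%:R + 3 / 2
             - Num.sqrt (4 * s1%:R ^+ 2 + 4 * s1%:R + (s2%:R + 1 / 2) ^+ 2)) : R)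
           + delta)%R.
Proof.
move=> s1_gt0; apply: (@unimodal_floor _ R (peak R s1 s2)).
- case=> [n | //]; rewrite addrC -intS.
  by case/(peak_rising s1_gt0) => lt_n2s1 rising; rewrite fss_succ_ge.
- case=> [n lt_peak_n | k lt_peak_k]; first by rewrite addrC -intS fss_succ_le ?(peak_falling lt_peak_n).
  by have := lt_trans (@peak_gt0 R s1 s2) lt_peak_k; rewrite ltr0z.
Qed.
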